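(* Let $\Lambda=KQ/I$ be a finite dimensional string algebra over a field $K$ whose quiver $Q$ has a tree as underlying graph, and let $i\in Q_0$ be a vertex at which exactly two arrows start. Then $P(i)\not\cong C(f)$ for every irreducible monomorphism $f:X\to P(i)$ with $X$ indecomposable.
   Context: $K$ is a field, $Q$ a finite quiver with vertex set $Q_0$ and arrows $Q_1$, paths written right to left. $\Lambda=KQ/I$ with $I$ either $0$ or an admissible ideal, and $\Lambda$ is a string algebra: (i) at each vertex at most two arrows start and at most two end; (ii) if $\alpha\neq\beta,\gamma$ are arrows with $e(\alpha)=e(\beta)=s(\gamma)$ then $\gamma\alpha\in I$ or $\gamma\beta\in I$; (iii) if $\alpha\neq\beta,\gamma$ are arrows with $s(\alpha)=s(\beta)=e(\gamma)$ then $\alpha\gamma\in I$ or $\beta\gamma\in I$; (iv) $I$ is generated by paths. $\operatorname{mod}\Lambda$ is the category of finitely generated left $\Lambda$-modules, $\tau$ the Auslander–Reiten translation, $P(i)$ the indecomposable projective module at $i$. For $f:B\to C$ write $B=B_1\oplus B_2$ with $B_1\subseteq\operatorname{Ker}f$ and $f|_{B_2}$ right minimal; $\operatorname{Ker}(f|_{B_2})$ is the intrinsic kernel of $f$. An indecomposable projective $P$ almost factors through $f:M\to N$ if there are $h:P\to N$ and $g:\operatorname{rad}P\to M$ with $h|_{\operatorname{rad}P}=fg$ and $\operatorname{Im}h\not\subseteq\operatorname{Im}f$. The minimal right determiner $C(f)$ is the direct sum of the modules $\tau^{-1}L$, $L$ running over the indecomposable direct summands of the intrinsic kernel of $f$,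 and of the indecomposable projective modules almost factoring through $f$, one from each isomorphism class. *)

From HB Require Import structures.
From mathcomp Require Import all_boot all_algebra.
Set Implicit Arguments. Unset Strict Implicit. Unset Printing Implicit Defensive.
Import GRing.Theory.
Local Open Scope ring_scope.

Section Quiver.
Variables (V A : finType) (s t : A -> V).

(* A path is a list of arrows in the order they are traversed:
   [:: a1; a2; ...; ak] with t a_j = s a_(j+1); this is the path
   a_k ... a_2 a_1 in the paper's right-to-left notation. *)
Fixpoint composable (p : seq A) : bool :=
  match p with
  | a :: ((b :: _) as p') => (t a == s b) && composable p'
  | _ => true
  end.

Definition in_ideal (rels : seq (seq A)) (p : seq A) : bool :=
  has (fun r => infix r p) rels.

(* I = 0, or I is admissible (R^m <= I <= R^2) *)
Definition admissible_or_zero (rels : seq (seq A)) : Prop :=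
  rels = [::] \/
  ((forall r, r \in rels -> composable r && (2 <= size r)%N) /\
   exists m : nat, forall p, composable p -> size p = m -> in_ideal rels p).

Definition string_algebra (rels : seq (seq A)) : Prop :=
  (forall v : V, #|[set a | s a == v]| <= 2 /\ #|[set a | t a == v]| <= 2)%N /\
  (forall al be ga : A, al != be -> t al = s ga -> t be = s ga ->
     in_ideal rels [:: al; ga] \/ in_ideal rels [:: be; ga]) /\
  (forall al be ga : A, al != be -> s al = t ga -> s be = t ga ->
     in_ideal rels [:: ga; al] \/ in_ideal rels [:: ga; be]).

Definition undirected_adj : rel V :=
  fun x y => [exists a, ((s a == x) && (t a == y)) || ((s a == y) && (t a == x))].

Definition is_tree : Prop :=
  (forall x y, connect undirected_adj x y) /\ #|A|.+1 = #|V|.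

End Quiver.

Section Reps.
Variables (K : fieldType) (V A : finType) (s t : A -> V).

(* representations: vector spaces K^(rdim v), arrows acting on row vectors *)
Record rep := Rep {
  rdim : V -> nat;
  rmat : forall a : A, 'M[K]_(rdim (s a), rdim (t a)) }.

Fixpoint killed (M : rep) (m : nat) (x : V) (N : 'M[K]_(m, rdim M x))
  (p : seq A) {struct p} : bool :=
  match p with
  | [::] => N == 0
  | a :: p' =>
    match (x =P s a) with
    | ReflectT e => killed (castmx (erefl m, congr1 (rdim M) e) N *m rmat M a) p'
    | ReflectF _ => true
    end
  end.

Definition isMod (rels : seq (seq A)) (M : rep) : Prop :=
  forall r, r \in rels ->
    match r with
    | a :: _ => killed (1%:M : 'M[K]_(rdim M (s a))) r
    | [::] => true
    end.

Definition homT (M N : rep) := forall v : V, 'M[K]_(rdim M v, rdim N v).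
Definition is_hom (M N : rep) (f : homT M N) : Prop :=
  forall a : A, rmat M a *m f (t a) = f (s a) *m rmat N a.
(* composition: first f, then g *)
Definition hcomp (M N P : rep) (f : homT M N) (g : homT N P) : homT M P :=
  fun v => f v *m g v.
Definition hid (M : rep) : homT M M := fun v => 1%:M.
Definition hzero (M N : rep) : homT M N := fun v => 0.
Definition heq (M N : rep) (f g : homT M N) : Prop := forall v, f v = g v.

Definition mono (M N : rep) (f : homT M N) : Prop := forall v, row_free (f v).
Definition epi (M N : rep) (f : homT M N) : Prop := forall v, row_full (f v).
Definition split_mono (M N : rep) (f : homT M N) : Prop :=
  exists r : homT N M, is_hom r /\ heq (hcomp f r) (hid M).
Definition split_epi (M N : rep) (f : homT M N) : Prop :=
  exists r : homT N M, is_hom r /\ heq (hcomp r f) (hid N).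
Definition is_iso_hom (M N : rep) (f : homT M N) : Prop :=
  is_hom f /\ exists g : homT N M, is_hom g /\
    heq (hcomp f g) (hid M) /\ heq (hcomp g f) (hid N).
Definition iso (M N : rep) : Prop := exists f : homT M N, is_iso_hom f.

Definition nonzero (M : rep) : Prop := exists v, (0 < rdim M v)%N.
Definition indecomposable (M : rep) : Prop :=
  nonzero M /\ forall e : homT M M, is_hom e -> heq (hcomp e e) e ->
    heq e (hzero M M) \/ heq e (hid M).

Definition irreducible (rels : seq (seq A)) (M N : rep) (f : homT M N) : Prop :=
  ~ split_mono f /\ ~ split_epi f /\
  forall (Y : rep) (g : homT M Y) (h : homT Y N),
    isMod rels Y -> is_hom g -> is_hom h -> heq (hcomp g h) f ->
    split_mono g \/ split_epi h.

Definition projective (rels : seq (seq A)) (P : rep) : Prop :=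
  forall (X Y : rep) (p : homT X Y) (h : homT P Y),
    isMod rels X -> isMod rels Y -> is_hom p -> is_hom h -> epi p ->
    exists g : homT P X, is_hom g /\ heq (hcomp g p) h.
Definition injective (rels : seq (seq A)) (I : rep) : Prop :=
  forall (X Y : rep) (m : homT X Y) (h : homT X I),
    isMod rels X -> isMod rels Y -> is_hom m -> is_hom h -> mono m ->
    exists g : homT Y I, is_hom g /\ heq (hcomp m g) h.

Definition simple_rep (i : V) : rep :=
  @Rep (fun j => nat_of_bool (j == i)) (fun a => 0).

Definition is_Pi (rels : seq (seq A)) (i : V) (P : rep) : Prop :=
  isMod rels P /\ indecomposable P /\ projective rels P /\
  exists f : homT P (simple_rep i), is_hom f /\ ~ heq f (hzero _ _).

Definition zero_rep : rep := @Rep (fun _ => 0%N) (fun _ => 0).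
Definition dsum (M N : rep) : rep :=
  @Rep (fun v => (rdim M v + rdim N v)%N)
       (fun a => block_mx (rmat M a) 0 0 (rmat N a)).
Definition bigsum (Ms : seq rep) : rep := foldr dsum zero_rep Ms.
Definition inl_hom (M N : rep) : homT M (dsum M N) := fun v => row_mx 1%:M 0.
Definition inr_hom (M N : rep) : homT N (dsum M N) := fun v => row_mx 0 1%:M.

(* iota : R -> P is a monomorphism with image rad P = (arrow ideal) P,
   i.e. the smallest family of subspaces containing the images of all arrows *)
Definition is_rad_incl (P R : rep) (iota : homT R P) : Prop :=
  is_hom iota /\ mono iota /\
  (forall a : A, (rmat P a <= iota (t a))%MS) /\
  (forall U : forall v, 'M[K]_(rdim P v),
     (forall a : A, (rmat P a <= U (t a))%MS) -> forall v, (iota v <= U v)%MS).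

Definition almost_factors (rels : seq (seq A)) (M N : rep) (f : homT M N)
  (P : rep) : Prop :=
  isMod rels P /\ indecomposable P /\ projective rels P /\
  exists (R : rep) (iota : homT R P) (h : homT P N) (g : homT R M),
    isMod rels R /\ is_rad_incl iota /\ is_hom h /\ is_hom g /\
    heq (hcomp iota h) (hcomp g f) /\ exists v, ~~ (h v <= f v)%MS.

Definition right_minimal (B C : rep) (f : homT B C) : Prop :=
  forall phi : homT B B, is_hom phi -> heq (hcomp phi f) f -> is_iso_hom phi.

Definition is_kernel (L B C : rep) (k : homT L B) (f : homT B C) : Prop :=
  is_hom k /\ mono k /\ heq (hcomp k f) (hzero L C) /\
  forall v, (\rank (k v) + \rank (f v))%N = rdim B v.

Definition intrinsic_kernel (rels : seq (seq A)) (B C : rep) (f : homT B C)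
  (L : rep) : Prop :=
  isMod rels L /\
  exists (B1 B2 : rep) (phi : homT (dsum B1 B2) B) (k : homT L B2),
    isMod rels B1 /\ isMod rels B2 /\ is_iso_hom phi /\
    heq (hcomp (inl_hom B1 B2) (hcomp phi f)) (hzero B1 C) /\
    right_minimal (hcomp (inr_hom B1 B2) (hcomp phi f)) /\
    is_kernel k (hcomp (inr_hom B1 B2) (hcomp phi f)).

Definition almost_split (rels : seq (seq A)) (L E N : rep)
  (u : homT L E) (p : homT E N) : Prop :=
  isMod rels E /\ is_hom u /\ is_hom p /\ mono u /\ epi p /\
  heq (hcomp u p) (hzero L N) /\
  (forall v, (\rank (u v) + \rank (p v))%N = rdim E v) /\
  ~ split_mono u /\ ~ split_epi p /\
  (forall (Y : rep) (g : homT L Y), isMod rels Y -> is_hom g -> ~ split_mono g ->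
     exists g' : homT E Y, is_hom g' /\ heq (hcomp u g') g) /\
  (forall (Y : rep) (g : homT Y N), isMod rels Y -> is_hom g -> ~ split_epi g ->
     exists g' : homT Y E, is_hom g' /\ heq (hcomp g' p) g).

Definition tau_inv (rels : seq (seq A)) (L N : rep) : Prop :=
  (injective rels L /\ iso N zero_rep) \/
  (~ injective rels L /\ exists (E : rep) (u : homT L E) (p : homT E N),
     almost_split rels u p).

Definition is_MRD (rels : seq (seq A)) (M N : rep) (f : homT M N) (C : rep)
  : Prop :=
  isMod rels C /\
  exists (L : rep) (Ls Ns Ps : seq rep),
    intrinsic_kernel rels f L /\
    iso L (bigsum Ls) /\ size Ns = size Ls /\
    (forall k, (k < size Ls)%N ->
       isMod rels (nth zero_rep Ls k) /\ indecomposable (nth zero_rep Ls k) /\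
       isMod rels (nth zero_rep Ns k) /\
       tau_inv rels (nth zero_rep Ls k) (nth zero_rep Ns k)) /\
    (forall k, (k < size Ps)%N -> almost_factors rels f (nth zero_rep Ps k)) /\
    (forall k l, (k < size Ps)%N -> (l < size Ps)%N ->
       iso (nth zero_rep Ps k) (nth zero_rep Ps l) -> k = l) /\
    (forall P, almost_factors rels f P ->
       exists2 k, (k < size Ps)%N & iso P (nth zero_rep Ps k)) /\
    iso C (bigsum (Ns ++ Ps)).

End Reps.

(* Since the quiver is a tree, it has no oriented cycles; hence P(i) has the
   nonzero paths starting at i as a basis, P(i) is 1-dimensional at i, and every
   endomorphism of P(i) is a scalar (it is determined by the image of the
   trivial path).  As f is a monomorphism, its intrinsic kernel vanishes, so
   C(f) is a sum of projectives Q almost factoring through f.  If C(f) were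
   P(i), the composite P(i) -> Q -> P(i) of a retraction with the map
   witnessing this would be a scalar whose image is not in Im f, but whose
   restriction to rad P(i) is; so rad P(i) <= Im f.  As f is not split epi,
   Im f = rad P(i); but rad P(i) is the direct sum of the spans of the paths
   beginning with each of the two arrows starting at i, contradicting the
   indecomposability of X. *)

From mathcomp Require Import all_boot all_algebra.
From Stdlib Require Import FunctionalExtensionality.

Set Implicit Arguments. Unset Strict Implicit. Unset Printing Implicit Defensive.
Import GRing.Theory Num.Theory.
Local Open Scope ring_scope.

Section Walks.
Variables (V A : finType) (s t : A -> V).

Fixpoint walk (x : V) (p : seq A) : bool :=
  if p is a :: p' then (s a == x) && walk (t a) p' else true.

Definition walk_end (x : V) (p : seq A) : V := last x (map t p).

Lemma walk_cat x p q : walk x (p ++ q) = walk x p && walk (walk_end x p) q.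
Proof. by elim: p x => [|a p IH] x //=; rewrite IH andbA. Qed.

Lemma walk_rcons x p a : walk x (rcons p a) = walk x p && (s a == walk_end x p).
Proof. by rewrite -cats1 walk_cat /= andbT. Qed.

Lemma walk_end_rcons x p a : walk_end x (rcons p a) = t a.
Proof. by rewrite /walk_end map_rcons last_rcons. Qed.

Lemma walk_end_take x p y :
  y \in x :: map t p -> exists j, walk_end x (take j p) = y.
Proof.
elim: p x => [|a p IH] x; first by rewrite inE => /eqP ->; exists 0%N.
rewrite in_cons => /orP [/eqP ->|]; first by exists 0%N.
by case/IH => j ej; exists j.+1.
Qed.

Definition acyclic : Prop :=
  forall x p, walk x p -> walk_end x p = x -> p = [::].

Hypothesis no_cycle : acyclic.

Lemma acyclic_walk_uniq x p : walk x p -> uniq (x :: map t p).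
Proof.
elim: p x => [|a p IH] x //= /andP [/eqP sa wp].
have /= -> := IH _ wp; rewrite andbT.
apply/negP => /walk_end_take [j ej].
suff : a :: take j p = [::] by [].
apply: (no_cycle (x := x)) => //=; rewrite sa eqxx /=.
by move: wp; rewrite -{1}(cat_take_drop j p) walk_cat => /andP [].
Qed.

Lemma acyclic_walk_size x p : walk x p -> (size p < #|V|)%N.
Proof.
move/acyclic_walk_uniq/card_uniqP; rewrite /= size_map => <-.
exact: max_card.
Qed.

End Walks.

Section TreeAcyclic.
Variables (V A : finType) (s t : A -> V).
Hypothesis tree : is_tree s t.

Definition vertex_row (x : V) : 'rV[rat]_#|V| := delta_mx 0 (enum_rank x).

Definition incidence : 'M[rat]_(#|A|, #|V|) :=
  \matrix_(k, w) ((enum_val w == t (enum_val k))%:R - (enum_val w == s (enum_val k))%:R).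

Lemma row_incidence a : row (enum_rank a) incidence = vertex_row (t a) - vertex_row (s a).
Proof.
apply/rowP => w; rewrite !mxE enum_rankK.
by rewrite !eqxx /= -!(inj_eq enum_val_inj) !enum_rankK.
Qed.

Lemma tree_arrow_invariant_const (T : Type) (g : V -> T) :
  (forall a, g (t a) = g (s a)) -> forall x y, g x = g y.
Proof.
case: tree => conn _ g_inv x y; have /connectP [p pth ->] := conn x y.
elim: p x pth => [|z p IH] x //= /andP [xz /IH <-].
by case/existsP: xz => a /orP [] /andP [/eqP <- /eqP <-]; rewrite g_inv.
Qed.

(* The left kernel of the incidence matrix consists of the arrow-invariant,
   hence constant, vectors; so its rank is #|V| - 1 = #|A|. *)
Lemma incidence_row_free : row_free incidence.
Proof.
have [_ card] := tree.
have ker_const : (kermx incidence^T <= (const_mx 1 : 'rV[rat]_#|V|))%MS.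
  apply/row_subP => k; set u := row k _.
  have uB : incidence *m u^T = 0.
    apply: trmx_inj; rewrite trmx_mul trmxK trmx0; apply/sub_kermxP.
    by rewrite row_sub.
  clearbody u; pose g y := u 0 (enum_rank y).
  have g_inv a : g (t a) = g (s a).
    have := congr1 (row (enum_rank a)) uB.
    rewrite row_mul row_incidence row0 mulmxBl /vertex_row -!rowE => /rowP /(_ 0).
    by rewrite !mxE => /eqP; rewrite subr_eq0 => /eqP.
  have [x0 _] : exists x0 : V, x0 \in V by apply/card_gt0P; rewrite -card.
  have -> : u = g x0 *: const_mx 1.
    apply/rowP => w; rewrite !mxE mulr1 (tree_arrow_invariant_const g_inv x0 (enum_val w)).
    by rewrite /g enum_valK.
  exact: scalemx_sub.
have := leq_trans (mxrankS ker_const) (rank_leq_row _).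
rewrite mxrank_ker mxrank_tr leq_subLR => rk.
by rewrite /row_free eqn_leq rank_leq_row -ltnS card -addn1.
Qed.

Lemma incidence_walk x p :
  walk s t x p ->
  \sum_(a <- p) (vertex_row (t a) - vertex_row (s a)) = vertex_row (walk_end t x p) - vertex_row x.
Proof.
elim: p x => [|a p IH] x /=; first by rewrite big_nil subrr.
case/andP => /eqP <- /IH; rewrite big_cons => ->.
by rewrite addrC addrA subrK.
Qed.

(* A closed walk [p] gives the relation [\sum_(a <- p) row a = 0] between the
   rows of the incidence matrix, whose coefficient at the first arrow is positive. *)
Lemma tree_acyclic : acyclic s t.
Proof.
move=> x [//|a0 p] wp closed.
pose w : 'rV[rat]_#|A| := \sum_(a <- a0 :: p) delta_mx 0 (enum_rank a).
have : w *m incidence = 0 *m incidence.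
  rewrite mul0mx /w mulmx_suml.
  under eq_bigr do rewrite -rowE row_incidence.
  by rewrite (incidence_walk wp) closed subrr.
move/(row_free_inj incidence_row_free)/(congr1 (fun M : 'rV_#|A| => M 0 (enum_rank a0))).
rewrite /= /w summxE big_cons !mxE !eqxx /=.
have -> : \sum_(a <- p) delta_mx (0 : 'I_1) (enum_rank a) 0 (enum_rank a0)
          = (count_mem a0 p)%:R :> rat.
  rewrite -sum1_count natr_sum [RHS]big_mkcond; apply: eq_bigr => a _.
  by rewrite mxE eqxx /= (inj_eq enum_rank_inj) eq_sym; case: (a == a0).
by rewrite -natrD => /eqP; rewrite pnatr_eq0.
Qed.

End TreeAcyclic.

Section GradedVectors.
Variables (K : fieldType) (V A : finType) (s t : A -> V).
Variables (Y : rep K s t) (m : nat).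

Definition vcast (u v : V) (M : 'M[K]_(m, rdim Y u)) : 'M[K]_(m, rdim Y v) :=
  match u =P v with
  | ReflectT e => castmx (erefl m, congr1 (rdim Y) e) M
  | ReflectF _ => 0
  end.
Arguments vcast : clear implicits.

Lemma vcast_id u M : vcast u u M = M.
Proof.
by rewrite /vcast; case: eqP => // e; rewrite (eq_irrelevance e erefl) castmx_id.
Qed.

Lemma vcast_neq u v M : u != v -> vcast u v M = 0.
Proof. by rewrite /vcast; case: eqP. Qed.

Lemma vcast0 u v : vcast u v 0 = 0.
Proof. by rewrite /vcast; case: eqP => // e; case: v / e; rewrite castmx_id. Qed.

(* [m] elements of the total space of [Y], as one [m]-row matrix per vertex. *)
Definition gvec := forall w, 'M[K]_(m, rdim Y w).

Definition gvec0 : gvec := fun w => 0.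

Definition gvec_at (x : V) (N : 'M[K]_(m, rdim Y x)) : gvec := fun w => vcast x w N.
Arguments gvec_at : clear implicits.

Definition act_arrow (a : A) (T : gvec) : gvec :=
  gvec_at (t a) (T (s a) *m rmat Y a).

Definition act_path (T : gvec) (p : seq A) : gvec := foldl (fun T a => act_arrow a T) T p.

Lemma act_path_cat T p q : act_path T (p ++ q) = act_path (act_path T p) q.
Proof. exact: foldl_cat. Qed.

Lemma act_path_rcons T p a : act_path T (rcons p a) = act_arrow a (act_path T p).
Proof. exact: foldl_rcons. Qed.

Lemma gvec_at0 x : gvec_at x 0 = gvec0.
Proof. by apply: functional_extensionality_dep => w; rewrite /gvec_at vcast0. Qed.

Lemma act_arrow0 a : act_arrow a gvec0 = gvec0.
Proof. by rewrite /act_arrow mul0mx gvec_at0. Qed.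

Lemma act_path0 p : act_path gvec0 p = gvec0.
Proof. by elim: p => [|a p IH] //=; rewrite /act_path /= act_arrow0. Qed.

Lemma act_arrow_at a x N :
  act_arrow a (gvec_at x N) = gvec_at (t a) (vcast x (s a) N *m rmat Y a).
Proof. by []. Qed.

End GradedVectors.

Arguments vcast {K V A s t Y m} u v M.
Arguments gvec_at {K V A s t Y m} x N.
Arguments gvec0 {K V A s t Y m}.

Section PathAction.
Variables (K : fieldType) (V A : finType) (s t : A -> V) (Y : rep K s t).

Lemma vcastMl m n u v (N : 'M[K]_(n, m)) (M : 'M[K]_(m, rdim Y u)) :
  vcast u v (N *m M) = N *m vcast u v M.
Proof.
rewrite /vcast; case: eqP => [e|_]; last by rewrite mulmx0.
by case: v / e; rewrite !castmx_id.
Qed.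

Lemma gvec_atMl m n x (N : 'M[K]_(n, m)) (M : 'M[K]_(m, rdim Y x)) :
  gvec_at x (N *m M) = fun w => N *m gvec_at x M w.
Proof. by apply: functional_extensionality_dep => w; rewrite /gvec_at vcastMl. Qed.

Lemma act_pathMl m n (N : 'M[K]_(n, m)) (T : gvec Y m) p :
  act_path (fun w => N *m T w) p = fun w => N *m act_path T p w.
Proof.
elim: p T => [|a p IH] T //=; rewrite /act_path /= -IH.
by rewrite /act_arrow -mulmxA gvec_atMl.
Qed.

Lemma killedP m x (N : 'M[K]_(m, rdim Y x)) p :
  killed N p <-> act_path (gvec_at x N) p = gvec0.
Proof.
elim: p x N => [|a p IH] x N /=.
  split; first by move/eqP ->; rewrite gvec_at0.
  by move/(congr1 (fun T => T x)); rewrite /= /gvec_at vcast_id => ->.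
rewrite /act_path /= -/(act_path _ p) act_arrow_at /vcast.
case: (x =P s a) => [e|_]; first exact: IH.
by rewrite mul0mx gvec_at0 act_path0.
Qed.

(* The action of [p1 ++ r ++ p2] factors through that of the relation [r]. *)
Lemma act_path_ideal rels m (T : gvec Y m) p :
  [::] \notin rels -> isMod rels Y -> in_ideal rels p -> act_path T p = gvec0.
Proof.
move=> nil_notin Ymod /hasP [r rin /infixP [p1 [p2 ->]]].
rewrite !act_path_cat; set T' := act_path T p1.
suff -> : act_path T' r = gvec0 by rewrite act_path0.
have := Ymod r rin; case: r rin => [|a r] rin; first by rewrite rin in nil_notin.
move/killedP => kill_r.
have -> : act_path T' (a :: r) = act_path (gvec_at (s a) (T' (s a) *m 1%:M)) (a :: r).
  by rewrite mulmx1 /act_path /= /act_arrow /gvec_at vcast_id.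
by rewrite gvec_atMl act_pathMl kill_r; apply: functional_extensionality_dep => w; rewrite mulmx0.
Qed.

End PathAction.

Lemma row_freeM (K : fieldType) m n p (M : 'M[K]_(m, n)) (N : 'M[K]_(n, p)) :
  row_free M -> row_free N -> row_free (M *m N).
Proof. by rewrite /row_free => freeM freeN; rewrite mxrankMfree. Qed.

Lemma flatmx_eq0 (K : fieldType) m n (M : 'M[K]_(m, n)) : m = 0%N -> M = 0.
Proof. by move=> m0; move: M; rewrite m0 => M; rewrite flatmx0. Qed.

Lemma cards2_distinct (T : finType) (P : pred T) :
  #|[set x | P x]| = 2 -> exists x y, [/\ x != y, P x & P y].
Proof.
move/eqP/cards2P => [x [y [xy Pxy]]]; exists x, y; split=> //.
  by have := in_set2 x x y; rewrite -Pxy inE eqxx.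
by have := in_set2 y x y; rewrite -Pxy inE eqxx orbT.
Qed.

Section RepBasics.
Variables (K : fieldType) (V A : finType) (s t : A -> V).
Notation rep := (rep K s t).

Lemma hcomp_is_hom (M N P : rep) (f : homT M N) (g : homT N P) :
  is_hom f -> is_hom g -> is_hom (hcomp f g).
Proof. by move=> hf hg a; rewrite /hcomp mulmxA hf -mulmxA hg mulmxA. Qed.

Lemma hid_is_hom (M : rep) : is_hom (hid M).
Proof. by move=> a; rewrite /hid mulmx1 mul1mx. Qed.

Lemma scalar_is_hom (M : rep) (c : K) : is_hom (fun v => c *: (1%:M : 'M[K]_(rdim M v))).
Proof. by move=> a; rewrite -scalemxAr mulmx1 -scalemxAl mul1mx. Qed.

Lemma iso_trans (M N P : rep) : iso M N -> iso N P -> iso M P.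
Proof.
move=> [f [hf [f' [hf' [ff' f'f]]]]] [g [hg [g' [hg' [gg' g'g]]]]].
exists (hcomp f g); split; first exact: hcomp_is_hom.
exists (hcomp g' f'); split; first exact: hcomp_is_hom.
split=> v; rewrite /hcomp /hid /= mulmxA.
  rewrite -(mulmxA (f v) (g v) (g' v)).
  by have := gg' v; rewrite /hcomp /hid => ->; rewrite mulmx1; apply: ff'.
rewrite -(mulmxA (g' v) (f' v) (f v)).
by have := f'f v; rewrite /hcomp /hid => ->; rewrite mulmx1; apply: g'g.
Qed.

Lemma iso_rdim (M N : rep) : iso M N -> forall v, rdim M v = rdim N v.
Proof.
move=> [f [_ [g [_ [fg gf]]]]] v; apply/eqP.
by rewrite eqn_leq (mulmx1_min (fg v)) (mulmx1_min (gf v)).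
Qed.

Lemma iso_nonzero (M N : rep) : iso M N -> nonzero M -> nonzero N.
Proof. by move=> /iso_rdim MN [v Mv]; exists v; rewrite -MN. Qed.

Lemma simple_rep_mod rels i : isMod rels (simple_rep K s t i).
Proof.
move=> [|a r] _ //; apply/killedP.
by rewrite /act_path /= act_arrow_at mulmx0 gvec_at0 -/(act_path _ r) act_path0.
Qed.

Lemma iso_dsum_retract (P M N : rep) : iso P (dsum M N) ->
  exists pi : homT P M, is_hom pi /\ forall v, row_full (pi v).
Proof.
move=> [f [hf [g [_ [_ gf]]]]].
exists (fun v => f v *m col_mx 1%:M 0); split.
  move=> a; rewrite mulmxA hf -!mulmxA; congr (_ *m _).
  by rewrite /= mul_block_col mul_col_mx !mulmx1 !mul0mx mul1mx !mulmx0 !addr0.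
move=> v; apply/row_fullP; exists (row_mx 1%:M 0 *m g v).
have := gf v; rewrite /hcomp /hid => gfv.
by rewrite mulmxA -(mulmxA _ (g v)) gfv mulmx1 mul_row_col mul1mx mul0mx addr0.
Qed.

End RepBasics.

Arguments simple_rep_mod {K V A s t}.

Section PathModule.
Variables (K : fieldType) (V A : finType) (s t : A -> V).
Variables (rels : seq (seq A)) (i : V).
Hypothesis no_cycle : acyclic s t.
Hypothesis rels_long : forall r, r \in rels -> (2 <= size r)%N.

Lemma nil_notin_rels : [::] \notin rels.
Proof. by apply/negP => /rels_long. Qed.

Fixpoint seqs_upto n : seq (seq A) :=
  if n is n'.+1 then [::] :: [seq a :: p | a <- enum A, p <- seqs_upto n']
  else [:: [::]].

Lemma mem_seqs_upto n p : (p \in seqs_upto n) = (size p <= n)%N.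
Proof.
elim: n p => [|n IH] [|a p] //=.
rewrite in_cons /=; apply/allpairsP/idP => [[[b q] /= [_ qin [_ ->]]]|sz].
  by rewrite ltnS -IH.
by exists (a, p); rewrite mem_enum IH.
Qed.

Definition nonzero_path v p :=
  [&& walk s t i p, walk_end t i p == v & ~~ in_ideal rels p].

(* Nonzero paths have fewer than #|V| arrows since there is no oriented cycle. *)
Definition paths_to v := undup [seq p <- seqs_upto #|V| | nonzero_path v p].

Definition npaths v := size (paths_to v).

(* The projective P(i): the space at [v] has basis the nonzero paths from [i]
   to [v], and the arrow [a] maps the basis vector of [p] to the one of
   [rcons p a], or to 0 if [rcons p a] is not a nonzero path. *)
Definition path_rep : rep K s t := @Rep K V A s t npaths (fun a =>
  \matrix_(j, k) ((nth [::] (paths_to (t a)) k == rcons (nth [::] (paths_to (s a)) j) a)%:R)).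

Definition pvec v p : 'rV[K]_(npaths v) := \row_k ((nth [::] (paths_to v) k == p)%:R).

Lemma mem_paths_to v p : (p \in paths_to v) = nonzero_path v p.
Proof.
rewrite mem_undup mem_filter mem_seqs_upto andb_idr // => /and3P [w _ _].
exact/ltnW/(acyclic_walk_size no_cycle w).
Qed.

Lemma pvec_nth v (j : 'I_(npaths v)) : pvec v (nth [::] (paths_to v) j) = delta_mx 0 j.
Proof. by apply/rowP => k; rewrite !mxE /= (nth_uniq _ _ _ (undup_uniq _)). Qed.

Lemma pvec_in v p : p \in paths_to v ->
  exists2 j : 'I_(npaths v), nth [::] (paths_to v) j = p & pvec v p = delta_mx 0 j.
Proof.
rewrite -index_mem => lt; exists (Ordinal lt); first by rewrite nth_index // -index_mem.
by rewrite -pvec_nth /= nth_index // -index_mem.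
Qed.

Lemma pvec_out v p : p \notin paths_to v -> pvec v p = 0.
Proof.
move=> pn; apply/rowP => k; rewrite !mxE.
by case: eqP => // e; case/negP: pn; rewrite -e mem_nth.
Qed.

Lemma pvec_neq0 v p : p \in paths_to v -> pvec v p != 0.
Proof.
case/pvec_in => j _ ->; apply/eqP => /rowP /(_ j).
by rewrite !mxE !eqxx => /eqP; rewrite oner_eq0.
Qed.

Lemma mx_pvec_eq v n (M N : 'M[K]_(npaths v, n)) :
  (forall p, p \in paths_to v -> pvec v p *m M = pvec v p *m N) -> M = N.
Proof.
move=> MN; apply/row_matrixP => j; rewrite !rowE -pvec_nth.
exact/MN/mem_nth.
Qed.

Lemma pvec_rmat a q : q \in paths_to (s a) ->
  pvec (s a) q *m rmat path_rep a = pvec (t a) (rcons q a).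
Proof. by case/pvec_in => j <- ->; rewrite -rowE; apply/rowP => k; rewrite !mxE. Qed.

Lemma pvec_rmat_out a q : q \notin paths_to (s a) -> pvec (s a) q *m rmat path_rep a = 0.
Proof. by move/pvec_out ->; rewrite mul0mx. Qed.

Lemma nonzero_path_rcons v q a :
  nonzero_path v (rcons q a) -> v = t a /\ q \in paths_to (s a).
Proof.
case/and3P; rewrite walk_rcons walk_end_rcons => /andP [wq /eqP sa] /eqP <- nz.
split=> //; rewrite mem_paths_to /nonzero_path wq sa eqxx /=.
by apply: contra nz => /hasP [r rin ir]; apply/hasP; exists r; rewrite // -cats1 infix_catr.
Qed.

Lemma nil_in_paths_to : [::] \in paths_to i.
Proof.
rewrite mem_paths_to /nonzero_path /= eqxx /=; apply/hasP => [[r rin]].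
by rewrite infixs0 => /eqP r0; case/negP: nil_notin_rels; rewrite -r0.
Qed.

Lemma paths_to_i p : p \in paths_to i -> p = [::].
Proof. by rewrite mem_paths_to => /and3P [w /eqP e _]; apply: no_cycle w e. Qed.

Lemma npaths_i : npaths i = 1%N.
Proof.
have : uniq (paths_to i) := undup_uniq _.
have := nil_in_paths_to; have := paths_to_i; rewrite /npaths.
case: (paths_to i) => [|p [|q l]] //= nil_only _ /andP [].
have -> : p = [::] by apply: nil_only; rewrite mem_head.
have -> : q = [::] by apply: nil_only; rewrite !inE eqxx orbT.
by rewrite mem_head.
Qed.

Lemma rowV_npaths_i (r : 'rV[K]_(npaths i)) (k : 'I_(npaths i)) :
  r = r 0 k *: pvec i [::].
Proof.
apply/rowP => l; rewrite !mxE (paths_to_i (mem_nth _ (ltn_ord l))) eqxx mulr1.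
congr (r 0 _); apply: val_inj => /=.
have := ltn_ord k; have := ltn_ord l; move: (nat_of_ord k) (nat_of_ord l).
by rewrite npaths_i => a b; rewrite !ltnS !leqn0 => /eqP -> /eqP ->.
Qed.

Lemma act_path_pvec_ideal x p q : in_ideal rels (p ++ q) ->
  act_path (gvec_at (Y := path_rep) x (pvec x p)) q = gvec0.
Proof.
elim: q x p => [|a q IH] x p.
  rewrite cats0 => pI; rewrite pvec_out ?gvec_at0 // mem_paths_to /nonzero_path pI.
  by rewrite !andbF.
move=> pI; rewrite /act_path /= -/(act_path _ q) act_arrow_at.
have [e|ne] := eqVneq x (s a); last by rewrite vcast_neq // mul0mx gvec_at0 act_path0.
subst x; rewrite vcast_id; case: (boolP (p \in paths_to (s a))) => pin.
  by rewrite pvec_rmat //; apply: IH; rewrite cat_rcons.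
by rewrite pvec_rmat_out // gvec_at0 act_path0.
Qed.

Lemma path_rep_mod : isMod rels path_rep.
Proof.
move=> [//|a r] rin; apply/killedP.
apply: functional_extensionality_dep => w; apply/row_matrixP => j.
rewrite row0 rowE.
rewrite -[X in X = _]/((fun w => delta_mx 0 j *m act_path (gvec_at (s a) 1%:M) (a :: r) w) w).
rewrite -act_pathMl -gvec_atMl mulmx1 -pvec_nth act_path_pvec_ideal //.
by apply/hasP; exists (a :: r); last exact: suffix_infix.
Qed.

Section Lift.
Variables (Y : rep K s t) (y : 'rV[K]_(rdim Y i)).
Hypothesis Ymod : isMod rels Y.

Definition path_lift : homT path_rep Y :=
  fun v => \matrix_(j, k) (act_path (gvec_at i y) (nth [::] (paths_to v) j) v 0 k).

Lemma pvec_path_lift v p : p \in paths_to v ->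
  pvec v p *m path_lift v = act_path (gvec_at i y) p v.
Proof.
by case/pvec_in => j <- ->; rewrite -rowE; apply/rowP => k; rewrite !mxE.
Qed.

Lemma path_lift_nil : pvec i [::] *m path_lift i = y.
Proof. by rewrite pvec_path_lift ?nil_in_paths_to // /= /gvec_at vcast_id. Qed.

Lemma path_lift_is_hom : is_hom path_lift.
Proof.
move=> a; apply: mx_pvec_eq => p pin; rewrite !mulmxA pvec_rmat // pvec_path_lift //.
have act_rcons :
    act_path (gvec_at i y) (rcons p a) (t a) = act_path (gvec_at i y) p (s a) *m rmat Y a.
  by rewrite act_path_rcons /act_arrow /gvec_at vcast_id.
have [rin|rout] := boolP (rcons p a \in paths_to (t a)); first by rewrite pvec_path_lift.
rewrite pvec_out // mul0mx -act_rcons (act_path_ideal _ nil_notin_rels Ymod) //.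
move: pin rout; rewrite !mem_paths_to /nonzero_path walk_end_rcons eqxx walk_rcons.
by case/and3P => -> /eqP -> _; rewrite eqxx /= negbK.
Qed.

End Lift.

Lemma path_rep_hom_eq (Y : rep K s t) (phi psi : homT path_rep Y) :
  is_hom phi -> is_hom psi -> pvec i [::] *m phi i = pvec i [::] *m psi i -> heq phi psi.
Proof.
move=> hphi hpsi nil_eq v; apply: mx_pvec_eq => p; elim/last_ind: p v => [|q a IH] v.
  by rewrite mem_paths_to => /and3P [_ /eqP <- _].
rewrite mem_paths_to => /nonzero_path_rcons [-> qin].
by rewrite -pvec_rmat // -!mulmxA hphi hpsi !mulmxA IH.
Qed.

Lemma path_rep_end_scalar (h : homT path_rep path_rep) : is_hom h ->
  exists c, heq h (fun v => c *: (1%:M : 'M[K]_(npaths v))).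
Proof.
move=> hh; have [k0 _ _] := pvec_in nil_in_paths_to.
exists ((pvec i [::] *m h i) 0 k0); apply: path_rep_hom_eq => //.
  exact: (scalar_is_hom path_rep).
by rewrite -scalemxAr mulmx1 -rowV_npaths_i.
Qed.

Definition path_rep_top : homT path_rep (simple_rep K s t i) :=
  fun v => \matrix_(j, k) ((nth [::] (paths_to v) j == [::])%:R).

Lemma path_rep_top_is_hom : is_hom path_rep_top.
Proof.
move=> a; rewrite /= mulmx0; apply/matrixP => j k; rewrite !mxE.
apply: big1 => l _; rewrite !mxE; case: eqP => [->|]; last by rewrite mul0r.
by case: (nth _ _ _) => [|b q] /=; rewrite mulr0.
Qed.

Lemma path_rep_top_i_neq0 : path_rep_top i != 0.
Proof.
have [k0 nth_k0 _] := pvec_in nil_in_paths_to.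
have lt1 : (0 < nat_of_bool (i == i))%N by rewrite eqxx.
apply/eqP => /matrixP /(_ k0 (Ordinal lt1)); rewrite !mxE nth_k0 eqxx.
by move/eqP; rewrite oner_eq0.
Qed.

Lemma path_rep_top_epi : epi path_rep_top.
Proof.
move=> v; rewrite /row_full eqn_leq rank_leq_col /=.
have [e|/eqP ne] : v = i \/ v <> i by case: (v =P i); [left|right].
  subst v; apply: leq_trans (leq_b1 _) _.
  by rewrite lt0n mxrank_eq0 path_rep_top_i_neq0.
by move: (path_rep_top v); rewrite /= (negbTE ne).
Qed.

Lemma path_rep_top_i_free : row_free (path_rep_top i).
Proof.
rewrite /row_free eqn_leq rank_leq_row /=.
apply: (@leq_trans 1); first by rewrite npaths_i.
by rewrite lt0n mxrank_eq0 path_rep_top_i_neq0.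
Qed.

(* Lifting [P -> S(i)] along the epimorphism [path_rep_top] gives [al], and
   [path_lift] gives [be] with [be al = 1]; so [al be] is a nonzero idempotent
   of the indecomposable [P]. *)
Lemma Pi_iso_path_rep (P : rep K s t) : is_Pi rels i P ->
  exists (al : homT P path_rep) (be : homT path_rep P), [/\ is_hom al, is_hom be,
    heq (hcomp al be) (hid P) & heq (hcomp be al) (hid path_rep)].
Proof.
move=> [Pmod [Pind [Pproj [pi [hpi pi_neq0]]]]].
have [v pv] : exists v, pi v != 0.
  apply/existsP; apply: contraT; rewrite negb_exists => /forallP pi0.
  by case: pi_neq0 => v; apply/eqP; rewrite -[_ == _]negbK pi0.
have vi : v = i.
  move: (pi v) pv; rewrite /=; case: (v =P i) => // _ M.
  by rewrite (thinmx0 M) eqxx.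
subst v.
have pi_full : row_full (pi i).
  rewrite /row_full eqn_leq rank_leq_col /=; apply: leq_trans (leq_b1 _) _.
  by rewrite lt0n mxrank_eq0.
have [al [hal al_top]] := Pproj _ _ _ pi path_rep_mod (simple_rep_mod rels i)
  path_rep_top_is_hom hpi path_rep_top_epi.
pose y := pvec i [::] *m path_rep_top i *m pinvmx (pi i).
pose be := path_lift y.
have hbe : is_hom be := path_lift_is_hom y Pmod.
have y_al : y *m al i = pvec i [::].
  apply: (row_free_inj path_rep_top_i_free); rewrite /= -mulmxA.
  have := al_top i; rewrite /hcomp => ->.
  by rewrite mulmxKpV // submx_full.
have be_al : heq (hcomp be al) (hid path_rep).
  apply: path_rep_hom_eq; [exact: hcomp_is_hom | exact: hid_is_hom |].
  by rewrite /hcomp /hid mulmxA path_lift_nil y_al mulmx1.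
have idem : heq (hcomp (hcomp al be) (hcomp al be)) (hcomp al be).
  move=> w; have := be_al w; rewrite /hcomp /hid => ba.
  by rewrite mulmxA -(mulmxA (al w) (be w) (al w)) ba mulmx1.
case: (Pind.2 _ (hcomp_is_hom hal hbe) idem) => [al_be0|al_be1]; last by exists al, be.
have := be_al i; rewrite /hcomp /hid => ba.
have : pvec i [::] *m (be i *m al i) *m (be i *m al i) = 0.
  have := al_be0 i; rewrite /hcomp /hzero => al_be_i.
  by rewrite -!mulmxA (mulmxA (al i) (be i) (al i)) al_be_i mul0mx !mulmx0.
by rewrite ba !mulmx1 => /eqP; rewrite (negbTE (pvec_neq0 nil_in_paths_to)).
Qed.

Lemma arrow_in_paths_to a : s a = i -> [:: a] \in paths_to (t a).
Proof.
move=> sa; rewrite mem_paths_to /nonzero_path /= sa !eqxx /=; apply/hasP => [[r rin ar]].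
by have := leq_trans (rels_long rin) (size_infix ar).
Qed.

Section HeadProjection.
Variable a1 : A.

Definition head_proj v : 'M[K]_(npaths v) :=
  \matrix_(j, k) (((j == k) && (ohead (nth [::] (paths_to v) j) == Some a1))%:R).

Lemma pvec_head_proj v p :
  pvec v p *m head_proj v = (ohead p == Some a1)%:R *: pvec v p.
Proof.
have [pin|pout] := boolP (p \in paths_to v); last by rewrite pvec_out // mul0mx scaler0.
have [j <- ->] := pvec_in pin; rewrite -rowE; apply/rowP => k; rewrite !mxE eqxx /=.
by case: (j =P k) => [->|/eqP jk]; rewrite ?eqxx ?mulr1 // (eq_sym k) !(negbTE jk) mulr0.
Qed.

Lemma head_proj_idem v : head_proj v *m head_proj v = head_proj v.
Proof.
apply: mx_pvec_eq => p pin; rewrite mulmxA !pvec_head_proj -scalemxAl pvec_head_proj.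
by rewrite scalerA; case: (ohead p == Some a1); rewrite ?mulr1 ?mulr0.
Qed.

(* Away from [i] every basis path is nonempty, and appending an arrow does not
   change its first arrow. *)
Lemma head_proj_comm a : s a != i ->
  rmat path_rep a *m head_proj (t a) = head_proj (s a) *m rmat path_rep a.
Proof.
move=> ne; apply: mx_pvec_eq => p pin.
rewrite !mulmxA pvec_rmat // pvec_head_proj -scalemxAl pvec_rmat //.
case: p pin => [|b p] pin; last by rewrite pvec_head_proj rcons_cons.
by move: pin ne; rewrite mem_paths_to => /and3P [_ /eqP <- _]; rewrite eqxx.
Qed.

End HeadProjection.

Section RadicalEmbedding.
Variables (X : rep K s t) (f : homT X path_rep).
Hypotheses (hf : is_hom f) (mf : mono f).
Hypothesis rad_sub : forall a, (rmat path_rep a <= f (t a))%MS.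

Lemma rad_pvec_sub v p : p \in paths_to v -> p != [::] -> (pvec v p <= f v)%MS.
Proof.
case/lastP: p => [|q a] // pin _.
have [-> qin] : v = t a /\ q \in paths_to (s a) by apply: nonzero_path_rcons; rewrite -mem_paths_to.
by rewrite -pvec_rmat //; apply: submx_trans (submxMl _ _) (rad_sub a).
Qed.

Lemma rad_image_full v : v != i -> row_full (f v).
Proof.
move=> ne; rewrite -sub1mx; apply/row_subP => j; rewrite row1 -pvec_nth.
apply: rad_pvec_sub; first exact: mem_nth.
apply/eqP => e; move: (mem_nth [::] (ltn_ord j)); rewrite e mem_paths_to.
by case/and3P => _ /eqP ei _; move: ne; rewrite -ei eqxx.
Qed.

(* If [f i] were onto the line [P(i)_i], then [f] would be invertible. *)
Lemma rad_embedding_vanishes_at_i : ~ split_epi f -> rdim X i = 0%N.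
Proof.
move=> not_split.
have not_full : ~ row_full (f i).
  move=> fi; have full v : row_full (f v).
    by have [->|] := eqVneq v i; [exact: fi | exact: rad_image_full].
  pose g v := pinvmx (f v).
  have gf v : g v *m f v = 1%:M := mulVpmx (full v).
  have fg v : f v *m g v = 1%:M.
    by apply: (row_free_inj (mf v)); rewrite /= -mulmxA gf mulmx1 mul1mx.
  apply: not_split; exists g; split=> // a.
  apply: (row_full_inj (full (s a))).
  by rewrite mulmxA -hf -mulmxA fg mulmx1 mulmxA fg mul1mx.
have fi0 : f i = 0.
  apply/eqP; rewrite -mxrank_eq0 -leqn0.
  have : (\rank (f i) < npaths i)%N.
    rewrite ltn_neqAle rank_leq_col andbT.
    by apply/negP => /eqP full; apply: not_full; rewrite /row_full full.
  by rewrite npaths_i ltnS.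
by have := mf i; rewrite /row_free fi0 mxrank0 => /eqP <-.
Qed.

(* [rad P(i)] is the direct sum of the spans of the paths beginning with [a1]
   and of the other nonempty paths; [head_proj a1] pulled back along [f] is an
   idempotent endomorphism of [X] which is neither 0 nor 1. *)
Lemma rad_embedding_decomposable (a1 a2 : A) : a1 != a2 -> s a1 = i -> s a2 = i ->
  rdim X i = 0%N -> ~ indecomposable X.
Proof.
move=> a12 sa1 sa2 Xi0 [_ Xind].
pose e v := f v *m head_proj a1 v *m pinvmx (f v).
have ef v : e v *m f v = f v *m head_proj a1 v.
  rewrite mulmxKpV //; have [vi|ne] := eqVneq v i; last exact/submx_full/rad_image_full.
  by rewrite (@flatmx_eq0 _ _ _ (f v)) ?mul0mx ?sub0mx // vi.
have he : is_hom e.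
  move=> a; apply: (row_free_inj (mf (t a))) => /=.
  have [sai|ne] := eqVneq (s a) i.
    have Xs0 : rdim X (s a) = 0%N by rewrite sai.
    by rewrite [LHS]flatmx_eq0 // [RHS]flatmx_eq0.
  rewrite -mulmxA ef mulmxA hf -mulmxA head_proj_comm //.
  by rewrite -(mulmxA (e (s a))) hf [RHS]mulmxA ef mulmxA.
have e_idem : heq (hcomp e e) e.
  move=> v; apply: (row_free_inj (mf v)); rewrite /hcomp /=.
  by rewrite -mulmxA !ef mulmxA ef -mulmxA head_proj_idem.
have pvec_e v p y : pvec v p = y *m f v -> pvec v p *m head_proj a1 v = y *m (e v *m f v).
  by move=> ->; rewrite ef mulmxA.
have [e0|e1] := Xind e he e_idem.
  have pin := arrow_in_paths_to sa1; have /submxP [y ey] := rad_pvec_sub pin isT.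
  move/eqP: (pvec_e _ _ _ ey); rewrite e0 /hzero mul0mx mulmx0 pvec_head_proj /= eqxx scale1r.
  by rewrite (negbTE (pvec_neq0 pin)).
have pin := arrow_in_paths_to sa2; have /submxP [y ey] := rad_pvec_sub pin isT.
have a21 : (Some a2 == Some a1) = false by apply/eqP => [[a21]]; rewrite a21 eqxx in a12.
move/eqP: (pvec_e _ _ _ ey); rewrite e1 /hid mul1mx -ey pvec_head_proj a21 scale0r.
by rewrite eq_sym (negbTE (pvec_neq0 pin)).
Qed.

End RadicalEmbedding.

Section ProjectiveAtVertex.
Variables (P : rep K s t).
Hypothesis P_Pi : is_Pi rels i P.

Lemma Pi_end_scalar (h : homT P P) : is_hom h -> exists c, forall v, h v = c *: 1%:M.
Proof.
move=> hh; have [al [be [hal hbe ab ba]]] := Pi_iso_path_rep P_Pi.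
have [c hc] := path_rep_end_scalar (hcomp_is_hom hbe (hcomp_is_hom hh hal)).
exists c => v; have := ab v; have := hc v; rewrite /hcomp /hid => bha abv.
have <- : al v *m (be v *m (h v *m al v)) *m be v = h v.
  by rewrite !mulmxA abv mul1mx -mulmxA abv mulmx1.
by rewrite bha -scalemxAr mulmx1 -scalemxAl abv.
Qed.

Lemma Pi_rad_submodule_decomposable (a1 a2 : A) (X : rep K s t) (f : homT X P) :
  a1 != a2 -> s a1 = i -> s a2 = i -> is_hom f -> mono f -> ~ split_epi f ->
  (forall a, (rmat P a <= f (t a))%MS) -> ~ indecomposable X.
Proof.
move=> a12 sa1 sa2 hf mf not_split rad_sub.
have [al [be [hal hbe ab ba]]] := Pi_iso_path_rep P_Pi.
pose f' := hcomp f al.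
have hf' : is_hom f' := hcomp_is_hom hf hal.
have mf' : mono f'.
  by move=> v; apply: row_freeM (mf v) _; apply/row_freeP; exists (be v); apply: ab.
have rad_sub' a : (rmat path_rep a <= f' (t a))%MS.
  have := ba (t a); rewrite /hcomp /hid => bat.
  rewrite -[rmat _ a]mulmx1 -bat mulmxA hbe -mulmxA.
  by apply: submx_trans (submxMl _ _) _; apply: submxMr.
have not_split' : ~ split_epi f'.
  move=> [g [hg gf']]; apply: not_split; exists (hcomp al g); split.
    exact: hcomp_is_hom.
  move=> v; have := gf' v; have := ab v; rewrite /f' /hcomp /hid => abv gfv.
  rewrite -[LHS]mulmx1 -abv !mulmxA -(mulmxA (al v *m g v) (f v) (al v)).
  by rewrite -(mulmxA (al v) (g v)) gfv mulmx1 abv.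
apply: (rad_embedding_decomposable hf' mf' rad_sub' a12 sa1 sa2).
exact: (rad_embedding_vanishes_at_i hf' mf' rad_sub' not_split').
Qed.

(* Since [h] is a scalar, a nonzero [h] would put [rad P(i)] inside [Im f]. *)
Lemma Pi_rad_factoring_endo_sub (a1 a2 : A) (X : rep K s t) (f : homT X P) (h : homT P P) :
  a1 != a2 -> s a1 = i -> s a2 = i -> indecomposable X ->
  is_hom f -> mono f -> ~ split_epi f -> is_hom h ->
  (forall a, (rmat P a *m h (t a) <= f (t a))%MS) -> forall v, (h v <= f v)%MS.
Proof.
move=> a12 sa1 sa2 Xind hf mf not_split hh h_rad v.
have [c hc] := Pi_end_scalar hh.
have [c0|c0] := eqVneq c 0; first by rewrite hc c0 scale0r sub0mx.
exfalso; apply: (Pi_rad_submodule_decomposable a12 sa1 sa2 hf mf not_split _ Xind) => a.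
have := scalemx_sub c^-1 (h_rad a).
by rewrite hc -scalemxAr mulmx1 scalerA mulVf // scale1r.
Qed.

End ProjectiveAtVertex.

End PathModule.

Section MinimalRightDeterminer.
Variables (K : fieldType) (V A : finType) (s t : A -> V) (rels : seq (seq A)).
Notation rep := (rep K s t).

Lemma intrinsic_kernel_of_mono (M N L : rep) (f : homT M N) :
  mono f -> intrinsic_kernel rels f L -> forall v, rdim L v = 0%N.
Proof.
move=> mf [_ [B1 [B2 [phi [k [_ [_ [[_ [phi' [_ [phi_phi' _]]]] [_ [_ [_ [mk [kf _]]]]]]]]]]]]] v.
have f2_free : row_free (row_mx 0 1%:M *m (phi v *m f v)).
  apply: row_freeM; last apply: row_freeM (mf v).
    by apply/row_freeP; exists (col_mx 0 1%:M); rewrite mul_row_col mul0mx mulmx1 add0r.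
  by apply/row_freeP; exists (phi' v); apply: phi_phi'.
have k0 : k v = 0 by apply: (row_free_inj f2_free); rewrite /= mul0mx; apply: kf.
by have := mk v; rewrite /row_free k0 mxrank0 => /eqP <-.
Qed.

Lemma MRD_of_mono (M N C : rep) (f : homT M N) : mono f -> is_MRD rels f C ->
  exists Ps, (forall k, (k < size Ps)%N -> almost_factors rels f (nth (zero_rep K s t) Ps k)) /\
             iso C (bigsum Ps).
Proof.
move=> mf [_ [L [Ls [Ns [Ps [Lf [LLs [size_Ns [Ls_ind [Ps_af [_ [_ C_NsPs]]]]]]]]]]]].
have Ls0 : Ls = [::].
  case: Ls LLs Ls_ind {size_Ns} => [//|Q Ls] LLs Ls_ind.
  have [_ [[[v Qv] _] _]] := Ls_ind 0%N isT.
  have := iso_rdim LLs v; rewrite (intrinsic_kernel_of_mono mf Lf) /=.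
  by move/esym/eqP; rewrite addn_eq0 eqn0Ngt Qv.
by exists Ps; split=> //; move: size_Ns C_NsPs; rewrite Ls0 {Ls_ind}; case: Ns.
Qed.

Lemma almost_factors_retract_endo (M N Q : rep) (f : homT M N) (pi : homT N Q) :
  almost_factors rels f Q -> is_hom pi -> (forall v, row_full (pi v)) ->
  exists h : homT N N, [/\ is_hom h, forall a, (rmat N a *m h (t a) <= f (t a))%MS
                           & exists v, ~~ (h v <= f v)%MS].
Proof.
move=> [_ [_ [_ [R [iota [hQ [g [_ [[_ [_ [radQ _]]] [hhQ [_ [iota_hQ [v0 hv0]]]]]]]]]]]]].
move=> hpi pi_full; exists (hcomp pi hQ); split; first exact: hcomp_is_hom.
  move=> a; rewrite /hcomp mulmxA hpi -mulmxA.
  apply: submx_trans (submxMl _ _) _; apply: submx_trans (submxMr _ (radQ a)) _.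
  by have := iota_hQ (t a); rewrite /hcomp => ->; apply: submxMl.
exists v0; apply: contra hv0 => /(submx_trans _); apply.
have [B Bpi] := row_fullP (pi_full v0).
by apply/submxP; exists B; rewrite /hcomp mulmxA Bpi mul1mx.
Qed.

End MinimalRightDeterminer.

Local Close Scope ring_scope.

Theorem lemma3p8 (K : fieldType) (V A : finType) (s t : A -> V)
  (rels : seq (seq A)) :
  admissible_or_zero s t rels -> string_algebra s t rels -> is_tree s t ->
  forall i : V, #|[set a | s a == i]| = 2 ->
  forall (P X : rep K s t) (f : homT X P),
    is_Pi rels i P -> isMod rels X -> indecomposable X ->
    is_hom f -> mono f -> irreducible rels f ->
    forall C : rep K s t, is_MRD rels f C -> ~ iso P C.
Proof.
move=> adm _ tree i two_arrows P X f P_Pi _ Xind hf mf [_ [not_split _]] C MRD PC.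
have no_cycle := tree_acyclic tree.
have rels_long r : r \in rels -> (2 <= size r)%N.
  by case: adm => [-> //|[long _]] /long /andP [].
have [a1 [a2 [a12 sa1 sa2]]] := cards2_distinct two_arrows.
have [[|Q Ps] [Ps_af CPs]] := MRD_of_mono mf MRD.
  by have [v] := iso_nonzero (iso_trans PC CPs) P_Pi.2.1.1.
have [pi [hpi pi_full]] := iso_dsum_retract (iso_trans PC CPs).
have [h [hh h_rad [v]]] := almost_factors_retract_endo (Ps_af 0%N isT) hpi pi_full.
by rewrite (Pi_rad_factoring_endo_sub no_cycle rels_long P_Pi a12 (eqP sa1) (eqP sa2)
  Xind hf mf not_split hh h_rad).
Qed.
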